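(* For every LTL formula $\varphi$ in positive normal form, $\Theta(\mathrm{LF}(\varphi)) \Leftrightarrow \varphi$.
   Context: LTL formulae in positive normal form (PNF) over a finite set $AP$ of atomic propositions: $\varphi,\psi ::= p \mid \neg p \mid \mathbf{tt} \mid \mathbf{ff} \mid \varphi\wedge\psi \mid \varphi\vee\psi \mid \bigcirc\varphi \mid \varphi\,\mathcal{U}\,\psi \mid \varphi\,\mathcal{R}\,\psi$, interpreted over infinite words $\sigma\in\Sigma^\omega$ with an interpretation $I:\Sigma\to\mathcal{P}(AP)$ in the standard way ($\bigcirc$ = next, $\mathcal{U}$ = until, $\mathcal{R}$ = release). A temporal formula is one not starting with a conjunction or disjunction. A literal $\ell$ is an element of $AP\cup\neg AP$. A monomial $\mu,\nu$ is either $\mathbf{ff}$ or a set of literals not containing both $\ell$ and $\neg\ell$; $\Theta(\mu)=\mathbf{ff}$ if $\mu=\mathbf{ff}$, otherwise $\Theta(\mu)=\bigwedge\mu$ (so the empty monomial, written $\mathbf{tt}$, has $\Theta=\mathbf{tt}$). Smart conjunction $\mu\sqcap\nu$ is $\mathbf{ff}$ if either is $\mathbf{ff}$ or if $\mu\cup\nu$ contains some $\ell$ and $\neg\ell$, and $\mu\cup\nu$ otherwise. $\varphi\,\dot\wedge\,\psi$ denotes formal conjunction of temporal formulae, normalized modulo associativity, commutativity and idempotence using a fixed total order on formulae ($\mathbf{tt}$ is the empty formal conjunction). $\mathrm{simp}(\varphi\wedge\psi)=\{\varphi'\,\dot\wedge\,\psi' \mid \varphi'\in\mathrm{simp}(\varphi),\psi'\in\mathrm{simp}(\psi)\}$,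 $\mathrm{simp}(\varphi\vee\psi)=\mathrm{simp}(\varphi)\cup\mathrm{simp}(\psi)$, $\mathrm{simp}(\varphi)=\{\varphi\}$ for temporal $\varphi$. Linear factors: $\mathrm{LF}(\ell)=\{\langle\{\ell\},\mathbf{tt}\rangle\}$; $\mathrm{LF}(\mathbf{tt})=\{\langle\mathbf{tt},\mathbf{tt}\rangle\}$; $\mathrm{LF}(\mathbf{ff})=\{\}$; $\mathrm{LF}(\varphi\vee\psi)=\mathrm{LF}(\varphi)\cup\mathrm{LF}(\psi)$; $\mathrm{LF}(\varphi\wedge\psi)=\{\langle\mu\sqcap\nu,\varphi'\,\dot\wedge\,\psi'\rangle \mid \langle\mu,\varphi'\rangle\in\mathrm{LF}(\varphi),\langle\nu,\psi'\rangle\in\mathrm{LF}(\psi),\mu\sqcap\nu\neq\mathbf{ff}\}$; $\mathrm{LF}(\bigcirc\varphi)=\{\langle\mathbf{tt},\varphi'\rangle\mid\varphi'\in\mathrm{simp}(\varphi)\}$; $\mathrm{LF}(\varphi\,\mathcal{U}\,\psi)=\mathrm{LF}(\psi)\cup\{\langle\mu,\varphi'\,\dot\wedge\,(\varphi\,\mathcal{U}\,\psi)\rangle\mid\langle\mu,\varphi'\rangle\in\mathrm{LF}(\varphi)\}$; $\mathrm{LF}(\varphi\,\mathcal{R}\,\psi)=\{\langle\mu\sqcap\nu,\varphi'\,\dot\wedge\,\psi'\rangle\mid\langle\mu,\varphi'\rangle\in\mathrm{LF}(\varphi),\langle\nu,\psi'\rangle\in\mathrm{LF}(\psi),\mu\sqcap\nu\neq\mathbf{ff}\}\cup\{\langle\nu,\psi'\,\dot\wedge\,(\varphi\,\mathcal{R}\,\psi)\rangle\mid\langle\nu,\psi'\rangle\in\mathrm{LF}(\psi)\}$.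 For a set of linear factors, $\Theta(\{\langle\mu_i,\varphi_i\rangle\mid i\in I\})=\bigvee_{i\in I}(\Theta(\mu_i)\wedge\bigcirc\varphi_i)$. *)

From mathcomp Require Import all_boot.
Set Implicit Arguments. Unset Strict Implicit. Unset Printing Implicit Defensive.

Section LTL.
Variable AP : finType.

Inductive ltl : Type :=
| Atom of AP
| NAtom of AP
| TT | FF
| And of ltl & ltl
| Or of ltl & ltl
| Next of ltl
| Until of ltl & ltl
| Release of ltl & ltl.

Definition sdrop {Sigma : Type} (k : nat) (w : nat -> Sigma) : nat -> Sigma :=
  fun n => w (k + n).

Fixpoint sat {Sigma : Type} (I : Sigma -> {set AP}) (w : nat -> Sigma) (f : ltl)
  : Prop :=
  match f with
  | Atom p => p \in I (w 0)
  | NAtom p => p \notin I (w 0)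
  | TT => True
  | FF => False
  | And f g => sat I w f /\ sat I w g
  | Or f g => sat I w f \/ sat I w g
  | Next f => sat I (sdrop 1 w) f
  | Until f g => exists k, sat I (sdrop k w) g /\
                   forall j, j < k -> sat I (sdrop j w) f
  | Release f g => forall k, sat I (sdrop k w) g \/
                   exists j, j < k /\ sat I (sdrop j w) f
  end.

(* literals: (p, true) is p, (p, false) is ~ p *)
Definition literal := (AP * bool)%type.
(* monomials: None is ff, Some s is the set of literals s *)
Definition monomial := option (seq literal).

Definition consistent (s : seq literal) : bool :=
  all (fun l => (l.1, ~~ l.2) \notin s) s.

Definition smart_and (m n : monomial) : monomial :=
  match m, n with
  | Some s, Some t => if consistent (s ++ t) then Some (undup (s ++ t)) else None
  | _, _ => None
  end.

(* formal conjunction of temporal formulae: list of conjuncts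
   (tt = empty list) for ACI normalization *)
Definition fconj := seq ltl.
Definition fand (a b : fconj) : fconj := a ++ b.

Fixpoint simp (f : ltl) : seq fconj :=
  match f with
  | And f g => [seq fand a b | a <- simp f, b <- simp g]
  | Or f g => simp f ++ simp g
  | _ => [:: [:: f]]
  end.

Definition lfactor := (monomial * fconj)%type.

Definition and_factors (L1 L2 : seq lfactor) : seq lfactor :=
  [seq x <- [seq (smart_and p.1 q.1, fand p.2 q.2) | p <- L1, q <- L2]
     | x.1 != None].

Fixpoint LF (f : ltl) : seq lfactor :=
  match f with
  | Atom p => [:: (Some [:: (p, true)], [::])]
  | NAtom p => [:: (Some [:: (p, false)], [::])]
  | TT => [:: (Some [::], [::])]
  | FF => [::]
  | Or f g => LF f ++ LF g
  | And f g => and_factors (LF f) (LF g)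
  | Next f => [seq (Some [::], c) | c <- simp f]
  | Until f g => LF g ++ [seq (p.1, fand p.2 [:: Until f g]) | p <- LF f]
  | Release f g => and_factors (LF f) (LF g)
                   ++ [seq (p.1, fand p.2 [:: Release f g]) | p <- LF g]
  end.

Definition lit_formula (l : literal) : ltl :=
  if l.2 then Atom l.1 else NAtom l.1.

Definition Theta_mon (m : monomial) : ltl :=
  match m with
  | None => FF
  | Some s => foldr And TT (map lit_formula s)
  end.

Definition fconj_formula (c : fconj) : ltl := foldr And TT c.

Definition Theta (L : seq lfactor) : ltl :=
  foldr Or FF [seq And (Theta_mon p.1) (Next (fconj_formula p.2)) | p <- L].

Definition ltl_equiv (f g : ltl) : Prop :=
  forall (Sigma : Type) (I : Sigma -> {set AP}) (w : nat -> Sigma),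
    sat I w f <-> sat I w g.

End LTL.

From mathcomp Require Import all_boot.
From Stdlib Require Import Classical.
Set Implicit Arguments. Unset Strict Implicit. Unset Printing Implicit Defensive.

(* Induction on the formula, along which Theta is a homomorphism: concatenating
   factor lists is disjunction, and their product is conjunction, because smart
   conjunction is exact on monomials and a factor with monomial ff only adds the
   unsatisfiable disjunct ff. The temporal cases are then the expansion laws
     f U g <-> g \/ (f /\ X (f U g))   and   f R g <-> (f /\ g) \/ (g /\ X (f R g)),
   and the next case uses that simp f is a disjunctive normal form of f. *)

Section LinearFactors.
Variables (AP : finType) (Sigma : Type) (I : Sigma -> {set AP}).

Local Notation "w |= f" := (sat I w f) (at level 70).
Local Notation disj := (foldr (@Or AP) (@FF AP)).
Local Notation conj := (foldr (@And AP) (@TT AP)).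

(* [sdrop j (sdrop 1 w)] is convertible to [sdrop j.+1 w], so shifting the
   witnesses of U and R needs no reindexing lemma. *)
Lemma sat_Until_unfold w f g :
  w |= Until f g <-> w |= g \/ (w |= f /\ sdrop 1 w |= Until f g).
Proof.
split=> /=.
- case=> [[|k] [gk fk]]; first by left.
  by right; split; [exact: (fk 0) | exists k; split=> // j jk; exact: (fk j.+1)].
- case=> [g0|[f0 [k [gk fk]]]]; first by exists 0.
  by exists k.+1; split=> // -[|j] // /fk.
Qed.

Lemma sat_Release_unfold w f g :
  w |= Release f g <-> (w |= f /\ w |= g) \/ (w |= g /\ sdrop 1 w |= Release f g).
Proof.
split=> /=.
- move=> fRg; have g0 : w |= g by case: (fRg 0) => [|[j []]].
  have [f0|nf0] := classic (w |= f); [by left | right; split=> // k].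
  case: (fRg k.+1) => [gk|[[|j] [jk fj]]]; [by left | by [] | by right; exists j].
- case=> [[f0 g0]|[g0 fRg]] [|k]; [by left | by right; exists 0 | by left |].
  by case: (fRg k) => [|[j [jk fj]]]; [left | right; exists j.+1].
Qed.

Lemma sat_disj_cat w fs gs : w |= disj (fs ++ gs) <-> w |= disj fs \/ w |= disj gs.
Proof. by elim: fs => [|f fs IH] /=; [tauto | rewrite IH; tauto]. Qed.

Lemma sat_conj_cat w fs gs : w |= conj (fs ++ gs) <-> w |= conj fs /\ w |= conj gs.
Proof. by elim: fs => [|f fs IH] /=; [tauto | rewrite IH; tauto]. Qed.

Lemma sat_disj_allpairs (A B : Type) (F : A -> ltl AP) (G : B -> ltl AP)
    (H : A -> B -> ltl AP) w s t :
  (forall a b, w |= H a b <-> w |= F a /\ w |= G b) ->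
  w |= disj [seq H a b | a <- s, b <- t] <->
  w |= disj (map F s) /\ w |= disj (map G t).
Proof.
move=> satH.
have sat_row a : w |= disj [seq H a b | b <- t] <-> w |= F a /\ w |= disj (map G t).
  by elim: t => [|b t IHt] /=; [tauto | rewrite satH IHt; tauto].
elim: s => [|a s IHs] /=; first tauto.
rewrite sat_disj_cat IHs sat_row; tauto.
Qed.

Definition lit_holds w (l : literal AP) : bool := (l.1 \in I (w 0)) == l.2.

Lemma sat_lit_formula w l : w |= lit_formula l <-> lit_holds w l.
Proof. by case: l => p [] /=; rewrite /lit_holds /=; case: (p \in _). Qed.

Lemma sat_Theta_mon w s : w |= Theta_mon (Some s) <-> all (lit_holds w) s.
Proof.
elim: s => [|l s IH] //=; rewrite sat_lit_formula IH.
by split=> [[-> ->] | /andP].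
Qed.

Lemma all_lit_holds_consistent w s : all (lit_holds w) s -> consistent s.
Proof.
move=> /allP s_holds; apply/allP=> l /s_holds; apply: contraL => /s_holds.
by rewrite /lit_holds /=; case: (_ \in _); case: l.2.
Qed.

Lemma sat_smart_and w m n :
  w |= Theta_mon (smart_and m n) <-> w |= Theta_mon m /\ w |= Theta_mon n.
Proof.
case: m n => [s|] [t|] /=; try tauto.
rewrite !sat_Theta_mon.
have -> : all (lit_holds w) s /\ all (lit_holds w) t <-> all (lit_holds w) (s ++ t).
  by rewrite all_cat; split=> [[-> ->] | /andP].
case: ifPn => [_|inconsistent_st].
- by rewrite sat_Theta_mon (eq_all_r (mem_undup _)).
- by split=> // /all_lit_holds_consistent; rewrite (negbTE inconsistent_st).
Qed.

Lemma sat_Theta_cat w L1 L2 : w |= Theta (L1 ++ L2) <-> w |= Theta L1 \/ w |= Theta L2.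
Proof. by rewrite /Theta map_cat sat_disj_cat. Qed.

Lemma sat_Theta_filter_ff w L : w |= Theta [seq x <- L | x.1 != None] <-> w |= Theta L.
Proof.
elim: L => [|[[s|] c] L IH] //=; last by rewrite IH; tauto.
by rewrite /Theta /= -/(Theta _) IH.
Qed.

Lemma sat_Theta_and_factors w L1 L2 :
  w |= Theta (and_factors L1 L2) <-> w |= Theta L1 /\ w |= Theta L2.
Proof.
rewrite /and_factors sat_Theta_filter_ff /Theta map_allpairs.
by apply: sat_disj_allpairs => p q /=; rewrite sat_smart_and sat_conj_cat; tauto.
Qed.

Lemma sat_Theta_append_next w L h :
  w |= Theta [seq (p.1, fand p.2 [:: h]) | p <- L] <-> w |= Theta L /\ sdrop 1 w |= h.
Proof.
elim: L => [|p L IH] /=; first tauto.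
by rewrite IH /fand /fconj_formula sat_conj_cat /=; tauto.
Qed.

Lemma sat_Theta_next w cs :
  w |= Theta [seq (Some [::], c) | c <- cs] <-> sdrop 1 w |= disj (map (@fconj_formula AP) cs).
Proof. by elim: cs => [|c cs IH] /=; [tauto | rewrite IH; tauto]. Qed.

Lemma sat_simp w f : w |= disj (map (@fconj_formula AP) (simp f)) <-> w |= f.
Proof.
elim: f w => [p|p|||f IHf g IHg|f IHf g IHg|f|f g|f g] w /=; try tauto.
- rewrite map_allpairs -IHf -IHg; apply: sat_disj_allpairs => a b.
  exact: sat_conj_cat.
- by rewrite map_cat sat_disj_cat IHf IHg.
Qed.

Lemma sat_Theta_LF w f : w |= Theta (LF f) <-> w |= f.
Proof.
elim: f w => [p|p|||f IHf g IHg|f IHf g IHg|f _|f IHf g IHg|f IHf g IHg] w /=.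
1-4: by tauto.
- by rewrite sat_Theta_and_factors IHf IHg.
- by rewrite sat_Theta_cat IHf IHg.
- by rewrite sat_Theta_next sat_simp.
- by rewrite sat_Theta_cat sat_Theta_append_next IHf IHg -sat_Until_unfold.
- by rewrite sat_Theta_cat sat_Theta_and_factors sat_Theta_append_next IHf IHg
    -sat_Release_unfold.
Qed.

End LinearFactors.

Theorem theorem2 (AP : finType) (phi : ltl AP) :
  ltl_equiv (Theta (LF phi)) phi.
Proof. by move=> Sigma I w; apply: sat_Theta_LF. Qed.
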